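(* Let $\mathbf A$ be a residuated semigroup balanced over $\mathbf I$. Then $(u_a/u_a)/u_b=(u_a/u_b)/(u_a/u_b)$ holds for all $a,b\in A$ if and only if $I$ has exactly one element.
   Context: A residuated semigroup is a structure $\langle A,\le,\cdot,\backslash,/\rangle$ where $\langle A,\le\rangle$ is a poset, $\langle A,\cdot\rangle$ is a semigroup, and $xy\le z\iff x\le z/y\iff y\le x\backslash z$. An element $p$ is positive if $a\le pa$ and $a\le ap$ for all $a$, idempotent if $pp=p$, central if $pa=ap$ for all $a$. Let $I$ be a nonempty set of central positive idempotents of $\mathbf A$ closed under multiplication ($\mathbf I=\langle I,\cdot\rangle$). $\mathbf A$ is balanced over $\mathbf I$ if for every $a\in A$ the element $u_a:=\max\{p\in I: pa=a\}$ exists (maximum w.r.t. $\le$). *)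

(* <A, le, mul, ldiv, rdiv> : ldiv x z = x\z, rdiv z y = z/y. *)
Record residuated_semigroup {A : Type} (le : A -> A -> Prop)
  (mul ldiv rdiv : A -> A -> A) : Prop := {
  rs_refl : forall x, le x x;
  rs_trans : forall x y z, le x y -> le y z -> le x z;
  rs_antisym : forall x y, le x y -> le y x -> x = y;
  rs_assoc : forall x y z, mul (mul x y) z = mul x (mul y z);
  rs_resid_r : forall x y z, le (mul x y) z <-> le x (rdiv z y);
  rs_resid_l : forall x y z, le (mul x y) z <-> le y (ldiv x z)
}.

Definition positive {A : Type} (le : A -> A -> Prop) (mul : A -> A -> A) (p : A) :=
  forall a, le a (mul p a) /\ le a (mul a p).
Definition idempotent {A : Type} (mul : A -> A -> A) (p : A) := mul p p = p.
Definition central {A : Type} (mul : A -> A -> A) (p : A) := forall a, mul p a = mul a p.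

Definition idem_set {A : Type} (le : A -> A -> Prop) (mul : A -> A -> A)
  (I : A -> Prop) : Prop :=
  (exists p, I p) /\
  (forall p, I p -> central mul p /\ positive le mul p /\ idempotent mul p) /\
  (forall p q, I p -> I q -> I (mul p q)).

Definition is_max {A : Type} (le : A -> A -> Prop) (S : A -> Prop) (m : A) : Prop :=
  S m /\ forall x, S x -> le x m.

Definition balanced_by {A : Type} (le : A -> A -> Prop) (mul : A -> A -> A)
  (I : A -> Prop) (u : A -> A) : Prop :=
  forall a, is_max le (fun p => I p /\ mul p a = a) (u a).

Definition balanced {A : Type} (le : A -> A -> Prop) (mul : A -> A -> A)
  (I : A -> Prop) : Prop := exists u, balanced_by le mul I u.


(* If [I] has a single element [p], every [u_a] equals [p] and both sides of the
   identity collapse to [p/p], because [p/p] is a fixed point of [_/p] and of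
   [_/(p/p)].  Conversely, for [p, q] in [I] put [r = pq]; the identity at
   [(a, b) = (p, r)] forces [r <= p], while positivity of [q] gives [p <= r],
   so [pq = p] for all [p, q] in [I], and commutativity makes [I] a singleton. *)

Section Residuated.

Context {A : Type} {le : A -> A -> Prop} {mul ldiv rdiv : A -> A -> A}.
Hypothesis H : residuated_semigroup le mul ldiv rdiv.

Local Infix "<=" := le.
Local Infix "*" := mul.
Local Infix "/" := rdiv.

Let le_refl := rs_refl _ _ _ _ H.
Let le_trans := rs_trans _ _ _ _ H.
Let le_antisym := rs_antisym _ _ _ _ H.
Let mulA := rs_assoc _ _ _ _ H.
Let le_rdiv_of_mul x y z : x * y <= z -> x <= z / y := proj1 (rs_resid_r _ _ _ _ H x y z).
Let mul_le_of_le_rdiv x y z : x <= z / y -> x * y <= z := proj2 (rs_resid_r _ _ _ _ H x y z).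

Lemma rdivK_le x y : (x / y) * y <= x.
Proof. apply mul_le_of_le_rdiv, le_refl. Qed.

Lemma mul_le_mono_l x y z : x <= y -> z * x <= z * y.
Proof.
  intro le_xy. apply (rs_resid_l _ _ _ _ H).
  apply le_trans with y; [exact le_xy |].
  apply (rs_resid_l _ _ _ _ H), le_refl.
Qed.

Section PositiveIdempotent.

Variable p : A.
Hypotheses (pos_p : positive le mul p) (idem_p : idempotent mul p).

Lemma le_rdiv_self : p <= p / p.
Proof. apply le_rdiv_of_mul. rewrite idem_p. apply le_refl. Qed.

Lemma rdiv_self_rdiv : (p / p) / p = p / p.
Proof.
  apply le_antisym.
  - apply le_trans with (((p / p) / p) * p); [apply pos_p | apply rdivK_le].
  - apply le_rdiv_of_mul, le_rdiv_of_mul.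
    rewrite mulA, idem_p. apply rdivK_le.
Qed.

Lemma rdiv_self_rdiv_self : (p / p) / (p / p) = p / p.
Proof.
  apply le_antisym.
  - apply le_trans with (((p / p) / (p / p)) * p); [apply pos_p |].
    apply le_trans with (((p / p) / (p / p)) * (p / p)); [| apply rdivK_le].
    apply mul_le_mono_l, le_rdiv_self.
  - apply le_rdiv_of_mul, le_rdiv_of_mul. rewrite mulA.
    apply le_trans with ((p / p) * p); [apply mul_le_mono_l |]; apply rdivK_le.
Qed.

End PositiveIdempotent.

(* The right-hand side always lies above [r]; the left-hand side [(p/p)/r] does
   so only when [r r p <= p]. *)
Lemma le_of_rdiv_identity r p :
  central mul r -> idempotent mul r -> r * p = r ->
  (p / p) / r = (p / r) / (p / r) -> r <= p.
Proof.
  intros central_r idem_r rp_r identity.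
  assert (r_le_rhs : r <= (p / r) / (p / r)).
  { apply le_rdiv_of_mul. rewrite central_r.
    apply le_rdiv_of_mul.
    rewrite mulA, idem_r. apply rdivK_le. }
  rewrite <- identity in r_le_rhs.
  apply mul_le_of_le_rdiv, mul_le_of_le_rdiv in r_le_rhs.
  rewrite mulA, rp_r, idem_r in r_le_rhs.
  exact r_le_rhs.
Qed.

Section Balanced.

Context {I : A -> Prop} {u : A -> A}.
Hypotheses (HI : idem_set le mul I) (Hu : balanced_by le mul I u).

Lemma balanced_by_mem a : I (u a).
Proof. apply (proj1 (proj1 (Hu a))). Qed.

Lemma balanced_by_fix p : I p -> u p = p.
Proof.
  intro Ip. destruct (Hu p) as [[Iup up_p] max_up].
  destruct HI as [_ [props _]].
  destruct (props _ Iup) as [central_up _].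
  destruct (props _ Ip) as [_ [pos_p _]].
  apply le_antisym.
  - apply le_trans with (p * u p); [apply pos_p |].
    rewrite <- central_up, up_p. apply le_refl.
  - apply max_up. split; [exact Ip | apply props, Ip].
Qed.

Lemma balanced_mul_absorb p q :
  (forall a b, (u a / u a) / u b = (u a / u b) / (u a / u b)) ->
  I p -> I q -> p * q = p.
Proof.
  intros identity Ip Iq.
  destruct HI as [_ [props closed]].
  destruct (props p Ip) as [central_p [_ idem_p]].
  destruct (props q Iq) as [_ [pos_q _]].
  destruct (props (p * q) (closed p q Ip Iq)) as [central_pq [_ idem_pq]].
  apply le_antisym.
  - apply le_of_rdiv_identity; [exact central_pq | exact idem_pq | |].
    + rewrite mulA, <- (central_p q), <- mulA, idem_p. reflexivity.
    + pose proof (identity p (p * q)) as identity_p_pq.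
      rewrite (balanced_by_fix p Ip), (balanced_by_fix (p * q)) in identity_p_pq
        by auto.
      exact identity_p_pq.
  - apply pos_q.
Qed.

End Balanced.

End Residuated.

Theorem lemma6p8 (A : Type) (le : A -> A -> Prop) (mul ldiv rdiv : A -> A -> A)
  (I : A -> Prop) (u : A -> A) :
  residuated_semigroup le mul ldiv rdiv ->
  idem_set le mul I ->
  balanced_by le mul I u ->
  ((forall a b, rdiv (rdiv (u a) (u a)) (u b) = rdiv (rdiv (u a) (u b)) (rdiv (u a) (u b)))
   <-> (exists p, I p /\ forall q, I q -> q = p)).
Proof.
  intros H HI Hu. pose proof HI as [[p0 Ip0] [props _]].
  split.
  - intro identity. exists p0. split; [exact Ip0 |]. intros q Iq.
    destruct (props p0 Ip0) as [central_p0 _].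
    rewrite <- (balanced_mul_absorb H HI Hu q p0 identity Iq Ip0).
    rewrite <- central_p0.
    apply (balanced_mul_absorb H HI Hu p0 q identity Ip0 Iq).
  - intros [p [Ip unique_p]] a b.
    rewrite (unique_p _ (balanced_by_mem Hu a)).
    rewrite (unique_p _ (balanced_by_mem Hu b)).
    destruct (props p Ip) as [_ [pos_p idem_p]].
    rewrite (rdiv_self_rdiv H p pos_p idem_p).
    rewrite (rdiv_self_rdiv_self H p pos_p idem_p).
    reflexivity.
Qed.
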